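(* Let $G=\langle c,s\rangle$ and $\phi:H\to G$ be as in the context. Let $w=s^{\alpha_0}c^{\beta_1}s^{\alpha_1}c^{\beta_2}\cdots s^{\alpha_{n-1}}c^{\beta_n}s^{\alpha_n}$, where $n\ge1$, $\alpha_0,\ldots,\alpha_n,\beta_1,\ldots,\beta_n$ are integers, all nonzero except possibly $\alpha_0$ and $\alpha_n$. Put $\gamma_j=\sum_{i=0}^{j-1}\alpha_i$ for $j=1,\ldots,n$ and $B_i=\{j\in\{1,\ldots,n\}:\gamma_j=\gamma_i\}$. If $w$, regarded as an element of $G$, belongs to $\phi(H)$, then $\sum_{j\in B_i}\beta_j=0$ for all $i=1,\ldots,n$.
   Context: Notation: $x^y=yxy^{-1}$, $[x,y]=xyx^{-1}y^{-1}$. For groups $A,B$, the wreath product $A\,\mathrm{Wr}\,B$ is the semidirect product $A^B\rtimes B$, where $A^B$ is the group of all functions $B\to A$ with pointwise multiplication and $B$ acts by $(bf)(x)=f(xb)$, written $f^b=bfb^{-1}$. $H$ is a group generated by a countable set $\{a^{(1)},a^{(2)},\ldots\}$. Let $Z=\langle z\rangle$ be infinite cyclic and $b^{(i)}\in H^Z$ with $b^{(i)}(z^k)=a^{(i)}$ if $k>0$ and $1$ otherwise; $K=\langle z,b^{(i)}\ (i\in\mathbb{N})\rangle\le H\,\mathrm{Wr}\,Z$. Let $\langle s\rangle$ be infinite cyclic and $c\in K^{\langle s\rangle}$ with $c(s)=z$, $c(s^{2^i})=b^{(i)}$ for $i>0$, $c(s^k)=1$ otherwise; $G=\langle c,s\rangle\le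 K\,\mathrm{Wr}\,\langle s\rangle$. The map $\phi:H\to G$, $a^{(i)}\mapsto[c,c^{s^{2^i-1}}]$, is an injective homomorphism. *)

From Stdlib Require Import ZArith List FunctionalExtensionality.
Open Scope Z_scope.

Record Grp := {
  car :> Type;
  gmul : car -> car -> car;
  ginv : car -> car;
  gone : car;
  gmulA : forall x y z, gmul x (gmul y z) = gmul (gmul x y) z;
  gmul1l : forall x, gmul gone x = x;
  gmul1r : forall x, gmul x gone = x;
  gmulVl : forall x, gmul (ginv x) x = gone;
  gmulVr : forall x, gmul x (ginv x) = gone
}.
Arguments gmul {g}.
Arguments ginv {g}.
Arguments gone {g}.

Definition gpow {A : Grp} (x : A) (n : Z) : A :=
  match n with
  | Z0 => gone
  | Zpos p => Nat.iter (Pos.to_nat p) (fun y => gmul y x) gone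
  | Zneg p => Nat.iter (Pos.to_nat p) (fun y => gmul y (ginv x)) gone
  end.

Definition gconj {A : Grp} (x y : A) : A := gmul (gmul y x) (ginv y).
Definition gcomm {A : Grp} (x y : A) : A :=
  gmul (gmul (gmul x y) (ginv x)) (ginv y).

Inductive gen {A : Grp} (S : A -> Prop) : A -> Prop :=
  | gen_in : forall x, S x -> gen S x
  | gen_one : gen S gone
  | gen_mul : forall x y, gen S x -> gen S y -> gen S (gmul x y)
  | gen_inv : forall x, gen S x -> gen S (ginv x).

Definition is_hom {A B : Grp} (f : A -> B) : Prop :=
  forall x y, f (gmul x y) = gmul (f x) (f y).

(* Unrestricted wreath product A Wr C with C infinite cyclic, C = <t> identified
   with Z via t^k <-> k.  An element (f, k) stands for f * t^k with f : C -> A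
   (all functions), and C acts by (t^k f)(x) = f(x + k), f^(t^k) = t^k f t^-k. *)
Section Wreath.
Variable A : Grp.

Definition wr_car : Type := ((Z -> A) * Z)%type.
Definition wr_mul (u v : wr_car) : wr_car :=
  (fun x => gmul (fst u x) (fst v (x + snd u)), snd u + snd v).
Definition wr_inv (u : wr_car) : wr_car :=
  (fun x => ginv (fst u (x - snd u)), - snd u).
Definition wr_one : wr_car := (fun _ => gone, 0).

Lemma wr_mulA u v w : wr_mul u (wr_mul v w) = wr_mul (wr_mul u v) w.
Proof.
  destruct u as [f a], v as [g b], w as [h c]; unfold wr_mul; simpl.
  f_equal; [|ring]. apply functional_extensionality; intro x.
  rewrite gmulA, Z.add_assoc; reflexivity.
Qed.
Lemma wr_mul1l u : wr_mul wr_one u = u.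
Proof.
  destruct u as [f a]; unfold wr_mul; simpl; f_equal.
  apply functional_extensionality; intro x; rewrite gmul1l, Z.add_0_r; reflexivity.
Qed.
Lemma wr_mul1r u : wr_mul u wr_one = u.
Proof.
  destruct u as [f a]; unfold wr_mul; simpl; f_equal; [|ring].
  apply functional_extensionality; intro x; apply gmul1r.
Qed.
Lemma wr_mulVl u : wr_mul (wr_inv u) u = wr_one.
Proof.
  destruct u as [f a]; unfold wr_mul, wr_inv, wr_one; simpl; f_equal; [|ring].
  apply functional_extensionality; intro x.
  replace (x + - a) with (x - a) by ring. replace (x - a - - a) with x by ring.
  apply gmulVl.
Qed.
Lemma wr_mulVr u : wr_mul u (wr_inv u) = wr_one.
Proof.
  destruct u as [f a]; unfold wr_mul, wr_inv, wr_one; simpl; f_equal; [|ring].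
  apply functional_extensionality; intro x.
  replace (x + a - a) with x by ring. apply gmulVr.
Qed.

Definition Wr : Grp :=
  {| car := wr_car; gmul := wr_mul; ginv := wr_inv; gone := wr_one;
     gmulA := wr_mulA; gmul1l := wr_mul1l; gmul1r := wr_mul1r;
     gmulVl := wr_mulVl; gmulVr := wr_mulVr |}.

Definition wr_gen : Wr := (fun _ => gone, 1).
Definition wr_base (f : Z -> A) : Wr := (f, 0).
End Wreath.

Section Construction.
Variable H : Grp.
Variable a : nat -> H.  (* a i = a^(i); only i >= 1 is used *)

Definition HWrZ : Grp := Wr H.
Definition zz : HWrZ := wr_gen H.
Definition bb (i : nat) : HWrZ := wr_base H (fun k => if 0 <? k then a i else gone).

(* K = <z, b^(i)> <= H Wr Z; K Wr <s> is realised inside (H Wr Z) Wr <s>. *)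
Definition KWrS : Grp := Wr HWrZ.
Definition ss : KWrS := wr_gen HWrZ.
(* c(s) = z, c(s^(2^i)) = b^(i) for i > 0, c(s^k) = 1 otherwise *)
Definition cfun (k : Z) : HWrZ :=
  if k =? 1 then zz
  else if andb (1 <? k) (k =? 2 ^ Z.log2 k) then bb (Z.to_nat (Z.log2 k))
  else gone.
Definition cc : KWrS := wr_base HWrZ cfun.

Fixpoint word_tail (al be : nat -> Z) (n : nat) : KWrS :=
  match n with
  | O => gone
  | S m => gmul (word_tail al be m) (gmul (gpow cc (be (S m))) (gpow ss (al (S m))))
  end.
Definition word (al be : nat -> Z) (n : nat) : KWrS :=
  gmul (gpow ss (al O)) (word_tail al be n).
End Construction.

Definition gamma (al : nat -> Z) (j : nat) : Z :=
  fold_right Z.add 0 (map al (seq 0 j)).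

Definition block_sum (al be : nat -> Z) (n i : nat) : Z :=
  fold_right Z.add 0
    (map be (filter (fun j => gamma al j =? gamma al i) (seq 1 n))).

(* Send K Wr <s> to Z Wr <s> by applying, coordinatewise, the projection
   H Wr Z -> Z onto the top group.  Each phi(a^(i)) is a commutator of two
   elements of the base group, which becomes abelian in Z Wr <s>, so phi(H)
   lies in the kernel.  The base coordinate of the image of w at x is
   sum_j beta_j [x + gamma_j = 1]; at x = 1 - gamma_i this is the block sum
   over B_i. *)

From Stdlib Require Import ZArith List Lia FunctionalExtensionality.
Open Scope Z_scope.

Section GroupFacts.
Variable A : Grp.

Lemma gmul_cancel_l (x y z : A) : gmul x y = gmul x z -> y = z.
Proof.
  intros E.
  rewrite <- (gmul1l _ y), <- (gmul1l _ z), <- (gmulVl _ x), <- !gmulA, E.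
  reflexivity.
Qed.

Lemma ginv_unique_l (x y : A) : gmul y x = gone -> y = ginv x.
Proof.
  intros E.
  rewrite <- (gmul1r _ y), <- (gmulVr _ x), gmulA, E, gmul1l.
  reflexivity.
Qed.

Lemma ginv_one : ginv (gone : A) = gone.
Proof. symmetry; apply ginv_unique_l, gmul1l. Qed.

Lemma gcomm_comm (x y : A) : gmul x y = gmul y x -> gcomm x y = gone.
Proof.
  intros E; unfold gcomm.
  rewrite E, <- (gmulA _ y x), gmulVr, gmul1r, gmulVr.
  reflexivity.
Qed.

Lemma gpow_eq_of_step (x : A) (F : Z -> A) :
  F 0 = gone -> (forall k, F (k + 1) = gmul (F k) x) ->
  forall n, gpow x n = F n.
Proof.
  intros F0 FS n.
  assert (Hpos : forall m, Nat.iter m (fun y => gmul y x) gone = F (Z.of_nat m)).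
  { induction m as [|m IH]; [simpl; now rewrite F0|].
    rewrite Nat.iter_succ, IH, Nat2Z.inj_succ, <- Z.add_1_r, FS.
    reflexivity. }
  assert (Hneg : forall m, Nat.iter m (fun y => gmul y (ginv x)) gone = F (- Z.of_nat m)).
  { induction m as [|m IH]; [simpl; now rewrite F0|].
    rewrite Nat.iter_succ, IH.
    replace (- Z.of_nat m) with (- Z.of_nat (S m) + 1) by lia.
    rewrite FS, <- gmulA, gmulVr, gmul1r.
    reflexivity. }
  destruct n as [|p|p]; simpl.
  - now rewrite F0.
  - now rewrite Hpos, positive_nat_Z.
  - now rewrite Hneg, positive_nat_Z.
Qed.

End GroupFacts.

Section Homomorphisms.
Variables A B : Grp.
Variable f : A -> B.
Hypothesis f_hom : is_hom f.

Lemma hom_one : f gone = gone.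
Proof.
  apply (gmul_cancel_l _ (f gone)).
  rewrite <- f_hom, !gmul1r.
  reflexivity.
Qed.

Lemma hom_inv x : f (ginv x) = ginv (f x).
Proof. apply ginv_unique_l; rewrite <- f_hom, gmulVl; exact hom_one. Qed.

Lemma hom_gpow x n : f (gpow x n) = gpow (f x) n.
Proof.
  assert (Hiter : forall u m,
    f (Nat.iter m (fun y => gmul y u) gone) = Nat.iter m (fun y => gmul y (f u)) gone).
  { intros u m; induction m as [|m IH]; [exact hom_one|].
    rewrite !Nat.iter_succ, f_hom, IH.
    reflexivity. }
  destruct n as [|p|p]; simpl.
  - exact hom_one.
  - apply Hiter.
  - rewrite Hiter, hom_inv.
    reflexivity.
Qed.

Lemma hom_gconj x y : f (gconj x y) = gconj (f x) (f y).
Proof. unfold gconj; rewrite !f_hom, hom_inv; reflexivity. Qed.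

Lemma hom_gcomm x y : f (gcomm x y) = gcomm (f x) (f y).
Proof. unfold gcomm; rewrite !f_hom, !hom_inv; reflexivity. Qed.

Lemma gen_hom_trivial (S : A -> Prop) :
  (forall x, S x -> f x = gone) -> forall h, gen S h -> f h = gone.
Proof.
  intros fS h Hh; induction Hh as [x Sx| |x y _ IHx _ IHy|x _ IHx].
  - exact (fS x Sx).
  - exact hom_one.
  - rewrite f_hom, IHx, IHy; apply gmul1l.
  - rewrite hom_inv, IHx; apply ginv_one.
Qed.

End Homomorphisms.

Lemma hom_comp (A B C : Grp) (f : A -> B) (g : B -> C) :
  is_hom f -> is_hom g -> is_hom (fun x => g (f x)).
Proof. intros Hf Hg x y; rewrite Hf, Hg; reflexivity. Qed.

Definition Zadd : Grp :=
  {| car := Z; gmul := Z.add; ginv := Z.opp; gone := 0;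
     gmulA := Z.add_assoc; gmul1l := Z.add_0_l; gmul1r := Z.add_0_r;
     gmulVl := Z.add_opp_diag_l; gmulVr := Z.add_opp_diag_r |}.

Definition wr_map {A B : Grp} (f : A -> B) (u : Wr A) : Wr B :=
  (fun x => f (fst u x), snd u).

Lemma wr_map_hom (A B : Grp) (f : A -> B) : is_hom f -> is_hom (wr_map f).
Proof.
  intros Hf [g k] [g' k']; unfold wr_map; simpl; unfold wr_mul; simpl; f_equal.
  apply functional_extensionality; intros x; apply Hf.
Qed.

Definition wr_top {A : Grp} (u : Wr A) : Zadd := snd u.

Lemma wr_top_hom (A : Grp) : is_hom (@wr_top A).
Proof. intros u v; reflexivity. Qed.

Lemma snd_gconj (A : Grp) (u v : Wr A) : snd (gconj u v) = snd u.
Proof. simpl; lia. Qed.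

Lemma wr_gcomm_base (A : Grp) (A_comm : forall x y : A, gmul x y = gmul y x)
  (u v : Wr A) : snd u = 0 -> snd v = 0 -> gcomm u v = gone.
Proof.
  destruct u as [g k], v as [g' k']; simpl; intros -> ->.
  unfold gcomm; simpl; unfold wr_mul, wr_inv, wr_one; simpl; f_equal.
  apply functional_extensionality; intros x.
  rewrite !Z.add_0_r, !Z.sub_0_r.
  apply gcomm_comm, A_comm.
Qed.

Lemma gpow_wr_gen (A : Grp) n : gpow (wr_gen A) n = ((fun _ => gone), n).
Proof.
  apply (gpow_eq_of_step (Wr A) _ (fun k => ((fun _ => gone), k))); [reflexivity|].
  intros k; simpl; unfold wr_mul; simpl; f_equal.
  apply functional_extensionality; intros x; symmetry; apply gmul1l.
Qed.

Lemma gpow_wr_base_Zadd (f : Z -> Zadd) n :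
  gpow (wr_base Zadd f) n = wr_base Zadd (fun x => n * f x).
Proof.
  apply (gpow_eq_of_step _ _ (fun k => wr_base Zadd (fun x => k * f x))); [reflexivity|].
  intros k; simpl; unfold wr_mul, wr_base; simpl; f_equal.
  apply functional_extensionality; intros x; rewrite Z.add_0_r; lia.
Qed.

Definition zsum (l : list Z) : Z := fold_right Z.add 0 l.

Lemma zsum_app l1 l2 : zsum (l1 ++ l2) = zsum l1 + zsum l2.
Proof. induction l1 as [|x l IH]; simpl; [reflexivity|]. unfold zsum in *; simpl; lia. Qed.

Lemma zsum_filter {I : Type} (p : I -> bool) (f : I -> Z) l :
  zsum (map f (filter p l)) = zsum (map (fun j => f j * Z.b2z (p j)) l).
Proof.
  induction l as [|j l IH]; [reflexivity|]; simpl.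
  destruct (p j); simpl; unfold zsum in *; rewrite <- IH; simpl; lia.
Qed.

Lemma gamma_succ al m : gamma al (S m) = gamma al m + al m.
Proof.
  unfold gamma; rewrite seq_S, map_app.
  change (zsum (map al (seq 0 m) ++ al m :: nil) = zsum (map al (seq 0 m)) + al m).
  rewrite zsum_app; simpl; lia.
Qed.

Section Projection.
Variable H : Grp.
Variable a : nat -> H.

Definition proj_ZwrZ : KWrS H -> Wr Zadd := wr_map (@wr_top H).

Lemma proj_ZwrZ_hom : is_hom proj_ZwrZ.
Proof. apply wr_map_hom, wr_top_hom. Qed.

Lemma proj_ZwrZ_ss : proj_ZwrZ (ss H) = wr_gen Zadd.
Proof. reflexivity. Qed.

Lemma proj_ZwrZ_cc : proj_ZwrZ (cc H a) = wr_base Zadd (fun x => Z.b2z (x =? 1)).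
Proof.
  unfold proj_ZwrZ, wr_map, wr_base; simpl; f_equal.
  apply functional_extensionality; intros x; unfold cfun.
  destruct (x =? 1); [reflexivity|].
  destruct ((1 <? x) && (x =? 2 ^ Z.log2 x))%bool; reflexivity.
Qed.

Lemma proj_ZwrZ_commutator m :
  proj_ZwrZ (gcomm (cc H a) (gconj (cc H a) (gpow (ss H) m))) = gone.
Proof.
  rewrite (hom_gcomm _ _ _ proj_ZwrZ_hom), (hom_gconj _ _ _ proj_ZwrZ_hom).
  apply wr_gcomm_base; [exact Z.add_comm | rewrite proj_ZwrZ_cc; reflexivity |].
  rewrite snd_gconj, proj_ZwrZ_cc; reflexivity.
Qed.

Lemma word_succ al be m :
  word H a al be (S m) =
  gmul (word H a al be m) (gmul (gpow (cc H a) (be (S m))) (gpow (ss H) (al (S m)))).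
Proof. apply gmulA. Qed.

Lemma proj_ZwrZ_word al be m :
  proj_ZwrZ (word H a al be m) =
  ((fun x => zsum (map (fun j => be j * Z.b2z (x + gamma al j =? 1)) (seq 1 m))),
   gamma al (S m)).
Proof.
  induction m as [|m IH].
  - unfold word; simpl word_tail.
    rewrite proj_ZwrZ_hom, (hom_gpow _ _ _ proj_ZwrZ_hom), proj_ZwrZ_ss, gpow_wr_gen.
    simpl; unfold wr_mul; simpl; f_equal; unfold gamma; simpl; lia.
  - rewrite word_succ, !proj_ZwrZ_hom, !(hom_gpow _ _ _ proj_ZwrZ_hom), IH,
      proj_ZwrZ_cc, proj_ZwrZ_ss, gpow_wr_base_Zadd, gpow_wr_gen, seq_S.
    simpl; unfold wr_mul, wr_base; simpl; f_equal.
    + apply functional_extensionality; intros x.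
      rewrite map_app, zsum_app, Z.add_0_r; simpl; lia.
    + rewrite (gamma_succ al (S m)); lia.
Qed.

End Projection.

Lemma block_sum_indicator al be n i :
  block_sum al be n i =
  zsum (map (fun j => be j * Z.b2z (1 - gamma al i + gamma al j =? 1)) (seq 1 n)).
Proof.
  unfold block_sum; fold (zsum (map be (filter (fun j => gamma al j =? gamma al i) (seq 1 n)))).
  rewrite zsum_filter; f_equal; apply map_ext; intros j.
  destruct (Z.eqb_spec (gamma al j) (gamma al i)),
    (Z.eqb_spec (1 - gamma al i + gamma al j) 1); lia.
Qed.

Theorem lemma5 (H : Grp) (a : nat -> H)
  (Hgen : forall h : H, gen (fun x => exists i : nat, (1 <= i)%nat /\ x = a i) h)
  (phi : H -> KWrS H)
  (phi_hom : is_hom phi)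
  (phi_a : forall i : nat, (1 <= i)%nat ->
     phi (a i) = gcomm (cc H a) (gconj (cc H a) (gpow (ss H) (2 ^ Z.of_nat i - 1))))
  (n : nat) (al be : nat -> Z)
  (hn : (1 <= n)%nat)
  (hal : forall i : nat, (1 <= i <= n - 1)%nat -> al i <> 0)
  (hbe : forall j : nat, (1 <= j <= n)%nat -> be j <> 0)
  (hw : exists h : H, phi h = word H a al be n) :
  forall i : nat, (1 <= i <= n)%nat -> block_sum al be n i = 0.
Proof.
  intros i _.
  assert (phi_H_trivial : forall h, proj_ZwrZ H (phi h) = gone).
  { intros h.
    refine (gen_hom_trivial _ _ _ (hom_comp _ _ _ _ _ phi_hom (proj_ZwrZ_hom H)) _ _ h (Hgen h)).
    intros x [k [hk ->]].
    rewrite phi_a by exact hk; apply proj_ZwrZ_commutator. }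
  destruct hw as [h Hh].
  pose proof (f_equal (fun u => fst u (1 - gamma al i)) (phi_H_trivial h)) as E.
  cbv beta in E; rewrite Hh, proj_ZwrZ_word in E.
  rewrite block_sum_indicator; exact E.
Qed.
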